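(* Let $n$ and $N$ be positive integers. Let $\mathcal{C}(N)$ be the set of partitions $\pi$ into distinct parts satisfying $\ell(\pi) \ge N > \ell(\pi) - s(\pi)$. Then \[ \sum_{\pi \in \mathcal{D}(n)\cap \mathcal{C}(N)} (-1)^{\#(\pi)-1} = \begin{cases} 1, & \text{if } N \mid n,\\ 0, & \text{if } N \nmid n.\end{cases} \]
   Context: $\mathcal{D}(n)$ denotes the set of all partitions of $n$ into distinct parts. For a partition $\pi$: $s(\pi)$ is its smallest part, $\ell(\pi)$ its largest part, and $\#(\pi)$ its number of parts. *)

From mathcomp Require Import all_boot all_order all_algebra.
Set Implicit Arguments. Unset Strict Implicit. Unset Printing Implicit Defensive.

(* A partition of n into distinct parts is encoded as its (finite) set of
   parts, a subset of {1,...,n} (viewed inside 'I_n.+1 = {0,...,n}),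
   not containing 0, whose elements sum to n. *)
Definition distinct_partition (n : nat) (A : {set 'I_n.+1}) : bool :=
  (ord0 \notin A) && (\sum_(i in A) (i : nat) == n)%N.

Definition lpart (n : nat) (A : {set 'I_n.+1}) : nat := \max_(i in A) (i : nat).

(* smallest part s(pi) (default value n is irrelevant for nonempty A) *)
Definition spart (n : nat) (A : {set 'I_n.+1}) : nat :=
  \big[minn/n]_(i in A) (i : nat).

Definition nparts (n : nat) (A : {set 'I_n.+1}) : nat := #|A|.

Definition in_C (N n : nat) (A : {set 'I_n.+1}) : bool :=
  (N <= lpart A) && (lpart A - spart A < N).

From mathcomp Require Import all_boot all_order all_algebra zify.
Import GRing.Theory.
Set Implicit Arguments. Unset Strict Implicit.

(* A distinct partition lies in C(N) exactly when its parts lie in the window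
   (m, m + N], m := l - N, and its largest part is m + N.  Parts in such a
   window have distinct residues mod N, so the partition is coded by its set R
   of residues together with m, where m mod N must lie in R.  The sum of the
   coded partition is sum(R) + N c, with c the number of k <= m whose residue
   lies in R; as m runs over the admissible values, c runs bijectively over the
   positive integers.  Hence a nonempty R codes exactly one partition of n if
   sum(R) + N <= n and N | n - sum(R), and none otherwise.  In the resulting
   alternating sum over residue sets, adding or removing the residue 0 flips
   the sign without changing sum(R), so everything cancels except the empty
   set, which contributes [N | n]. *)

Section CountIota.
Variable P : pred nat.

Lemma count_iotaS j : count P (iota 0 j.+1) = count P (iota 0 j) + P j.
Proof. by rewrite -addn1 iotaD count_cat /= addn0. Qed.

Lemma leq_count_iota i j : i <= j -> count P (iota 0 i) <= count P (iota 0 j).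
Proof. by move=> /subnKC <-; rewrite iotaD count_cat leq_addr. Qed.

Lemma count_iotaS_inj m1 m2 : P m1 -> P m2 ->
  count P (iota 0 m1.+1) = count P (iota 0 m2.+1) -> m1 = m2.
Proof.
move=> P1 P2 e; case: (ltngtP m1 m2) => // lt_m.
- have := leq_count_iota lt_m; rewrite e count_iotaS P2; lia.
- have := leq_count_iota lt_m; rewrite -e count_iotaS P1; lia.
Qed.

Lemma count_iotaS_surj c j : 0 < c -> c <= count P (iota 0 j) ->
  exists2 m, P m & count P (iota 0 m.+1) = c.
Proof.
move=> c_gt0; elim: j => [|j IHj]; first by rewrite leqNgt c_gt0.
rewrite count_iotaS; case: (leqP c (count P (iota 0 j))) => [/IHj //|lt_cj le_cj].
have Pj : P j by case: (P j) le_cj => //; rewrite addn0 leqNgt lt_cj.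
by exists j; rewrite // count_iotaS Pj; lia.
Qed.

End CountIota.

Section ResidueWindow.
Variables (N : nat) (N_gt0 : 0 < N).

Definition res (x : nat) : 'I_N := Ordinal (ltn_pmod x N_gt0).

(* The unique element of the window (m, m + N] congruent to r modulo N. *)
Definition window_rep (m : nat) (r : 'I_N) : nat := r + N * ((m + N - r) %/ N).

Lemma window_rep_bounds m r : m < window_rep m r <= m + N.
Proof.
rewrite /window_rep; have := divn_eq (m + N - r) N; have := ltn_pmod (m + N - r) N_gt0.
have := ltn_ord r; nia.
Qed.

Lemma res_window_rep m r : res (window_rep m r) = r.
Proof. by apply: val_inj; rewrite /= /window_rep addnC mulnC modnMDl modn_small. Qed.

Lemma window_eq_mod m x y : m < x <= m + N -> m < y <= m + N ->
  x = y %[mod N] -> x = y.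
Proof.
wlog le_yx : x y / y <= x => [hwlog|] x_in y_in eq_xy.
  by case: (leqP y x) => [|/ltnW] le; [|symmetry]; apply: hwlog.
move: eq_xy => /eqP; rewrite eqn_mod_dvd // => dvd_N.
case: (posnP (x - y)) => [|pos]; last have := dvdn_leq pos dvd_N; lia.
Qed.

Lemma window_repK m x : m < x <= m + N -> window_rep m (res x) = x.
Proof.
move=> x_in; apply: (window_eq_mod (window_rep_bounds _ _)) => //.
exact: (congr1 val (res_window_rep m (res x))).
Qed.

Lemma window_rep_res m : window_rep m (res m) = m + N.
Proof.
have -> : res m = res (m + N) by apply: val_inj; rewrite /= modnDr.
by rewrite window_repK //; lia.
Qed.

Lemma window_quotient_count m (r : 'I_N) :
  (m + N - r) %/ N = count (fun k => res k == r) (iota 0 m.+1).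
Proof.
have lt_rN := ltn_ord r.
elim: m => [|m IHm].
  rewrite /= add0n addn0.
  have -> : (res 0 == r) = (r == 0 :> nat) by rewrite -val_eqE /= mod0n eq_sym.
  case: (posnP r) => [->|r_gt0].
    by rewrite subn0 divnn N_gt0.
  by rewrite divn_small ?(gtn_eqF r_gt0); lia.
have succ_sub : m.+1 + N - r = (m + N - r).+1 by lia.
rewrite count_iotaS -IHm succ_sub divnS // -succ_sub addnC.
by rewrite -eqn_mod_dvd ?modnDr ?(modn_small lt_rN) //; lia.
Qed.

Lemma sum_window_rep (R : {set 'I_N}) m :
  \sum_(r in R) window_rep m r =
  \sum_(r in R) (r : nat) + N * count (fun k => res k \in R) (iota 0 m.+1).
Proof.
rewrite big_split -big_distrr; congr (_ + N * _).
under eq_bigr do rewrite window_quotient_count.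
elim: (iota 0 m.+1) => [|k s IHs] /=; first by rewrite big1.
rewrite big_split /= IHs; congr (_ + _).
case: (boolP (res k \in R)) => [Rk | notRk].
  by rewrite (bigD1 (res k)) //= eqxx big1 // => r /andP[_ /negbTE]; rewrite eq_sym => ->.
by apply: big1 => r Rr; apply/eqP; rewrite eqb0; apply: contraNN notRk => /eqP ->.
Qed.

Lemma leq_count_res_mul (R : {set 'I_N}) c :
  R != set0 -> c <= count (fun k => res k \in R) (iota 0 (c * N)).
Proof.
case/set0Pn => r Rr; elim: c => // c IHc.
have r_res : res (c * N + r) = r by apply: val_inj; rewrite /= modnMDl modn_small.
have le_rN : c * N + r < c.+1 * N by rewrite mulSnr ltn_add2l.
apply: leq_trans (leq_count_iota _ le_rN).
by rewrite count_iotaS r_res Rr addn1 ltnS (leq_trans IHc) // leq_count_iota // leq_addr.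
Qed.

End ResidueWindow.

Lemma spart_le n (A : {set 'I_n.+1}) (x : 'I_n.+1) : x \in A -> spart A <= x.
Proof. exact: (Order.TotalTheory.bigmin_le_cond n (fun i : 'I_n.+1 => i : nat)). Qed.

Section WindowPartitions.
Variables (n N : nat) (N_gt0 : 0 < N).
Local Notation res := (res N_gt0).

Definition window_code (R : {set 'I_N}) (m : nat) : bool :=
  (res m \in R) && (\sum_(r in R) window_rep m r == n).

Lemma window_codeE R m : window_code R m = (res m \in R) &&
  (n == \sum_(r in R) (r : nat) + N * count (fun k => res k \in R) (iota 0 m.+1)).
Proof. by rewrite /window_code sum_window_rep eq_sym. Qed.

Lemma window_code_bound R m : window_code R m -> m + N <= n.
Proof.
by case/andP => Rm /eqP <-; rewrite (bigD1 (res m)) //= window_rep_res leq_addr.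
Qed.

Definition admissible (R : {set 'I_N}) : bool :=
  (\sum_(r in R) (r : nat) + N <= n) && (N %| n - \sum_(r in R) (r : nat)).

Lemma card_window_codes R :
  #|[set m : 'I_n.+1 | window_code R m]| = (R != set0) && admissible R.
Proof.
pose P k := res k \in R.
case: (boolP (_ && _)) => [/and3P[R_ne le_sn /dvdnP[c def_c]] | no_code].
  have c_gt0 : 0 < c by move: def_c; case: (posnP c) => [->|//]; lia.
  have [m Pm cnt_m] := count_iotaS_surj c_gt0 (leq_count_res_mul N_gt0 c R_ne).
  have code_m : window_code R m by rewrite window_codeE Pm cnt_m; apply/eqP; lia.
  have lt_mn : m < n.+1 by have := window_code_bound code_m; lia.
  apply/eqP/cards1P; exists (Ordinal lt_mn); apply/setP => x; rewrite !inE.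
  apply/idP/eqP => [code_x | -> //]; apply: val_inj => /=.
  move: code_x code_m; rewrite !window_codeE => /andP[Px /eqP def_x] /andP[_ /eqP def_m].
  apply: (@count_iotaS_inj P _ _ Px Pm); apply/eqP; rewrite -(eqn_pmul2l N_gt0).
  by apply/eqP; rewrite /P; lia.
apply/eqP; rewrite cards_eq0; apply/eqP/setP => x; rewrite !inE; apply/negP.
rewrite window_codeE => /andP[Px /eqP def_n]; move/negP: no_code; apply.
have := count_iotaS P x; rewrite /P Px => cnt_pos.
apply/and3P; split; first by apply/set0Pn; exists (res x).
  lia.
by apply/dvdnP; exists (count P (iota 0 x.+1)); rewrite /P; lia.
Qed.

Definition window_decode (R : {set 'I_N}) (m : nat) : {set 'I_n.+1} :=
  [set inord (window_rep m r) | r in R].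

Section Decode.
Variables (R : {set 'I_N}) (m : nat).
Hypothesis code_Rm : window_code R m.

Lemma val_inord_window_rep (r : 'I_N) :
  (inord (window_rep m r) : 'I_n.+1) = window_rep m r :> nat.
Proof.
apply: inordK; have := window_rep_bounds N_gt0 m r; have := window_code_bound code_Rm; lia.
Qed.

Lemma window_decode_inj : {in R &, injective (fun r => inord (window_rep m r) : 'I_n.+1)}.
Proof.
move=> r1 r2 _ _ /(congr1 val); rewrite /= !val_inord_window_rep => eq_rep.
by rewrite -(res_window_rep N_gt0 m r1) eq_rep res_window_rep.
Qed.

Lemma mem_window_decode (x : 'I_n.+1) : x \in window_decode R m -> m < x <= m + N.
Proof. by case/imsetP => r _ ->; rewrite val_inord_window_rep window_rep_bounds. Qed.

Lemma lpart_window_decode : lpart (window_decode R m) = m + N.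
Proof.
apply/eqP; rewrite eqn_leq; apply/andP; split.
  by apply/bigmax_leqP => x /mem_window_decode /andP[].
have top : inord (window_rep m (res m)) \in window_decode R m.
  by apply: imset_f; case/andP: code_Rm.
have := @leq_bigmax_cond _ _ (fun x : 'I_n.+1 => x : nat) _ top.
by rewrite val_inord_window_rep window_rep_res.
Qed.

Lemma spart_window_decode : m < spart (window_decode R m).
Proof.
apply: (big_ind (fun y => m < y)) => [|a b|x /mem_window_decode /andP[] //].
  by have := window_code_bound code_Rm; lia.
by rewrite leq_min => -> ->.
Qed.

Lemma res_window_decode : [set res x | x : 'I_n.+1 in window_decode R m] = R.
Proof.
rewrite -imset_comp -[RHS]imset_id; apply: eq_imset => r /=.
by rewrite val_inord_window_rep res_window_rep.
Qed.

Lemma card_window_decode : nparts (window_decode R m) = #|R|.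
Proof. exact: card_in_imset window_decode_inj. Qed.

Lemma window_decode_partition :
  distinct_partition (window_decode R m) && in_C N (window_decode R m).
Proof.
rewrite -andbA; apply/and3P; split.
- by apply/negP => /mem_window_decode.
- rewrite big_imset /=; last exact: window_decode_inj.
  under eq_bigr do rewrite val_inord_window_rep.
  by case/andP: code_Rm.
- by rewrite /in_C lpart_window_decode; have := spart_window_decode; lia.
Qed.

End Decode.

Local Notation code := ({set 'I_N} * 'I_n.+1)%type.

Definition window_codes : {set code} := [set p : code | window_code p.1 p.2].

Lemma window_decode_codes_inj :
  {in window_codes &, injective (fun p : code => window_decode p.1 p.2)}.
Proof.
move=> [R1 m1] [R2 m2]; rewrite !inE /= => code1 code2 eq_dec; congr (_, _).
  by rewrite -(res_window_decode code1) eq_dec res_window_decode.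
apply: val_inj; have := lpart_window_decode code1.
by rewrite eq_dec lpart_window_decode // => /addIn.
Qed.

Lemma window_decode_onto (A : {set 'I_n.+1}) : distinct_partition A -> in_C N A ->
  A \in [set window_decode p.1 p.2 | p : code in window_codes].
Proof.
move=> /andP[_ /eqP sumA] /andP[le_Nl lt_ls].
have A_gt0 : 0 < #|A|.
  by rewrite card_gt0; apply: contraTneq le_Nl => A0; rewrite /lpart A0 big_set0 -ltnNge.
have [a Aa def_l] := eq_bigmax_cond (fun x : 'I_n.+1 => x : nat) A_gt0.
rewrite -/(lpart A) in def_l.
set m := lpart A - N.
have A_window (x : 'I_n.+1) : x \in A -> m < x <= m + N.
  move=> Ax; have := spart_le Ax.
  have := @leq_bigmax_cond _ _ (fun x : 'I_n.+1 => x : nat) _ Ax; rewrite -/(lpart A); lia.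
have repA (x : 'I_n.+1) : x \in A -> window_rep m (res x) = x.
  by move/A_window; apply: window_repK.
have res_inj : {in A &, injective (fun x : 'I_n.+1 => res x)}.
  by move=> x y Ax Ay eq_res; apply: val_inj; rewrite /= -(repA x) // eq_res repA.
have lt_mn : m < n.+1 by have := ltn_ord a; lia.
apply/imsetP; exists ([set res x | x : 'I_n.+1 in A], Ordinal lt_mn); last first.
  rewrite /window_decode /= -imset_comp -[LHS]imset_id; apply: eq_in_imset => x Ax.
  by apply: val_inj; rewrite /= repA // inordK.
rewrite inE /window_code /=; apply/andP; split.
  apply/imsetP; exists a => //; apply: val_inj; rewrite /= -def_l.
  by rewrite -(subnK le_Nl) -/m modnDr.
rewrite big_imset //=; under eq_bigr => x Ax do rewrite repA //.
by rewrite sumA.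
Qed.

Lemma sum_window_partitions (V : nmodType) (F : nat -> V) :
  (\sum_(A : {set 'I_n.+1} | distinct_partition A && in_C N A) F (nparts A) =
   \sum_(R : {set 'I_N} | R != set0) F #|R| *+ admissible R)%R.
Proof.
rewrite (eq_bigl (mem [set window_decode p.1 p.2 | p : code in window_codes])) => [|A];
  last first.
  apply/idP/idP => [/andP[] | /imsetP[[R m] code_Rm ->]]; first exact: window_decode_onto.
  by apply: window_decode_partition; rewrite inE in code_Rm.
rewrite big_imset /=; last exact: window_decode_codes_inj.
transitivity (\sum_R \sum_(m in [set m : 'I_n.+1 | window_code R m]) F #|R|)%R.
  rewrite pair_big_dep; apply: eq_big => [[R m] | [R m]]; first by rewrite !inE.
  by rewrite inE => /card_window_decode ->.
rewrite [RHS]big_mkcond; apply: eq_bigr => R _.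
by rewrite sumr_const card_window_codes; case: (R != set0).
Qed.

End WindowPartitions.

Lemma sum_signed_sets_eq0 (T : finType) (R : pzRingType) (x : T) (f : {set T} -> R) :
  (forall A, f (A :\ x) = f A) -> (\sum_(A : {set T}) (-1) ^+ #|A| * f A = 0)%R.
Proof.
move=> f_x; rewrite (bigID [pred A : {set T} | x \in A]) /=.
rewrite (reindex_onto (fun A => x |: A) (fun A => A :\ x)) /=; last exact: setD1K.
have add_x_pred A : (x \in x |: A) && ((x |: A) :\ x == A) = (x \notin A).
  rewrite setU11 /=; case: (boolP (x \in A)) => [xA | /setU1K ->]; last by rewrite eqxx.
  by apply/negbTE/eqP => /setP/(_ x); rewrite setD11 xA.
rewrite (eq_bigl _ _ add_x_pred) -big_split /= big1 // => A xA.
by rewrite cardsU1 xA add1n exprS mulN1r -[f (x |: A)]f_x setU1K // mulNr addNr.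
Qed.

Lemma sum_signed_nonempty_sets (T : finType) (R : pzRingType) (x : T) (f : {set T} -> R) :
  (forall A, f (A :\ x) = f A) ->
  (\sum_(A : {set T} | A != set0) (-1) ^+ #|A|.-1 * f A = f set0)%R.
Proof.
move=> f_x; have := sum_signed_sets_eq0 f_x.
rewrite (bigD1 set0) //= cards0 expr0 mul1r addrC => /eqP; rewrite addr_eq0 => /eqP sum_ne.
rewrite -[RHS]opprK -sum_ne -sumrN; apply: eq_bigr => A; rewrite -card_gt0.
by case: #|A| => // k _; rewrite exprS mulN1r mulNr opprK.
Qed.

Lemma sum_setD1_eq0 (T : finType) (A : {set T}) (z : T) (F : T -> nat) :
  F z = 0 -> \sum_(i in A :\ z) F i = \sum_(i in A) F i.
Proof.
move=> Fz0.
rewrite [RHS](bigID (pred1 z)) /= [in RHS]big1 ?add0n; last by move=> i /andP[_ /eqP ->].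
by apply: eq_bigl => i; rewrite !inE andbC.
Qed.

Theorem mainTheorem2 (n N : nat) (hn : (0 < n)%N) (hN : (0 < N)%N) :
  (\sum_(A : {set 'I_n.+1} | distinct_partition A && in_C N A)
      (-1) ^+ (nparts A).-1 : int)%R
  = (if (N %| n)%N then 1 else 0)%R.
Proof.
rewrite (sum_window_partitions n hN (fun k => (-1) ^+ k.-1 : int)%R).
under eq_bigr do rewrite -mulr_natr.
rewrite (sum_signed_nonempty_sets (x := Ordinal hN)) => [|R]; last first.
  by rewrite /admissible sum_setD1_eq0.
rewrite /admissible big_set0 add0n subn0.
by case: (boolP (N %| n)) => [dvd_Nn | _]; rewrite ?(dvdn_leq hn dvd_Nn) ?andbF.
Qed.
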